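(* Let $R$ be a commutative Noetherian ring, $n$ a non-negative integer and $L$ an $R$-module which is in dimension $<n$. Then the set $\{\mathfrak p\in\operatorname{Ass}_R L:\dim R/\mathfrak p\ge n\}$ is finite.
   Context: For an $R$-module $L$, $\dim\operatorname{Supp}L=\sup\{\dim R/\mathfrak p:\mathfrak p\in\operatorname{Supp}L\}$, the zero module having dimension $-\infty$. An $R$-module $L$ is ''in dimension $<n$'' if there is a finitely generated submodule $N\subseteq L$ with $\dim\operatorname{Supp}(L/N)<n$. *)

From HB Require Import structures.
From mathcomp Require Import all_boot all_order all_algebra.
From mathcomp Require Import boolp classical_sets cardinality.
Set Implicit Arguments. Unset Strict Implicit. Unset Printing Implicit Defensive.
Import GRing.Theory.
Local Open Scope ring_scope.
Local Open Scope classical_set_scope.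

Section CommAlg.
Variable R : comPzRingType.

Definition is_ideal (I : set R) : Prop :=
  I 0 /\ (forall x y, I x -> I y -> I (x + y)) /\ (forall a x, I x -> I (a * x)).

Definition prime_ideal (P : set R) : Prop :=
  is_ideal P /\ ~ P 1 /\ (forall a b, P (a * b) -> P a \/ P b).

Definition noetherian_ring : Prop :=
  forall I : nat -> set R, (forall k, is_ideal (I k)) ->
    (forall k, I k `<=` I k.+1) -> exists m, forall k, (m <= k)%N -> I k = I m.

(* dim R/p >= n : there is a chain q_0 < q_1 < ... < q_n of prime ideals
   of R containing p (= a chain of primes of length n in R/p). *)
Definition dim_quot_ge (p : set R) (n : nat) : Prop :=
  exists c : nat -> set R,
    (forall i, (i <= n)%N -> prime_ideal (c i) /\ p `<=` c i) /\
    (forall i, (i < n)%N -> c i `<` c i.+1).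

Variable L : lmodType R.

Definition ann (x : L) : set R := [set r | r *: x = 0].

Definition Ass (p : set R) : Prop := prime_ideal p /\ exists x : L, p = ann x.

Definition fg_submodule (N : set L) : Prop :=
  exists s : seq L, N = [set v | exists r : seq R,
     size r = size s /\ v = \sum_(i < size s) r`_i *: s`_i].

(* p in Supp (L/N): p prime and (L/N)_p <> 0, i.e. some x + N in L/N
   whose image x/1 in (L/N)_p is nonzero: no s outside p has s x in N. *)
Definition supp_quot (N : set L) (p : set R) : Prop :=
  prime_ideal p /\ exists x : L, forall s : R, ~ p s -> ~ N (s *: x).

(* L is in dimension < n: some f.g. N with dim Supp (L/N) < n, i.e.
   every p in Supp(L/N) has dim R/p < n (vacuous when L/N = 0). *)
Definition in_dim_lt (n : nat) : Prop :=
  exists N : set L, fg_submodule N /\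
    forall p, supp_quot N p -> ~ dim_quot_ge p n.

End CommAlg.

From HB Require Import structures.
From mathcomp Require Import all_boot all_order all_algebra.
From mathcomp Require Import boolp classical_sets cardinality.
Import GRing.Theory.
Local Open Scope ring_scope.
Local Open Scope classical_set_scope.
Set Implicit Arguments. Unset Strict Implicit.

(* If p is associated to L and not in Supp (L/N), then some t outside p sends
   the witness x into N, and p = ann (t x): so p is associated to N.  A
   finitely generated module over a Noetherian ring has finitely many
   associated primes: peeling off one generator x reduces Ass (Rx + N') to
   Ass N' together with Ass (R/I), I = (N' : x), and Ass (R/I) is finite by
   Noetherian induction on I, since every prime (I : b) other than a chosen
   (I : a) is also of the form (I + Ra : b). *)

Section Ideals.
Variable R : comPzRingType.
Implicit Types (I p q : set R) (a b c i r t : R).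

Lemma ideal0 I : is_ideal I -> I 0.
Proof. by case. Qed.

Lemma idealD I x y : is_ideal I -> I x -> I y -> I (x + y).
Proof. by case=> _ [+ _]; apply. Qed.

Lemma idealMl I a x : is_ideal I -> I x -> I (a * x).
Proof. by case=> _ [_]; apply. Qed.

Lemma idealMr I a x : is_ideal I -> I x -> I (x * a).
Proof. by rewrite mulrC; apply: idealMl. Qed.

Lemma idealB I x y : is_ideal I -> I x -> I y -> I (x - y).
Proof. by move=> hI hx hy; rewrite -mulN1r; apply: idealD => //; apply: idealMl. Qed.

Lemma prime_colonE p t : prime_ideal p -> ~ p t -> [set r | p (r * t)] = p.
Proof.
move=> [hp [_ pM]] npt; apply/seteqP; split=> r /=; last exact: idealMr.
by case/pM.
Qed.

Definition colon I a : set R := [set r | I (r * a)].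

Lemma colonM I a t : colon I (t * a) = [set r | colon I a (r * t)].
Proof. by apply/seteqP; split=> r; rewrite /colon /= mulrA. Qed.

Lemma colonD I a i : is_ideal I -> I i -> colon I (a + i) = colon I a.
Proof.
move=> hI hi; apply/seteqP; split=> r; rewrite /colon /= mulrDr => h.
  by rewrite -(addrK (r * i) (r * a)); apply: idealB => //; apply: idealMl.
by apply: idealD => //; apply: idealMl.
Qed.

Definition ass_quot I : set (set R) :=
  [set p | prime_ideal p /\ exists a, p = colon I a].

Definition ideal_adjoin I a : set R :=
  [set j | exists c i, I i /\ j = c * a + i].

Lemma ideal_adjoin_ideal I a : is_ideal I -> is_ideal (ideal_adjoin I a).
Proof.
move=> hI; split; first by exists 0, 0; rewrite mul0r addr0; split=> //; apply: ideal0.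
split=> [_ _ [c [i [hi ->]]] [d [k [hk ->]]]|b _ [c [i [hi ->]]]].
  exists (c + d), (i + k); split; first exact: idealD.
  by rewrite mulrDl addrACA.
by exists (b * c), (b * i); rewrite mulrDr mulrA; split=> //; apply: idealMl.
Qed.

Lemma sub_ideal_adjoin I a : I `<=` ideal_adjoin I a.
Proof. by move=> i hi; exists 0, i; rewrite mul0r add0r. Qed.

Lemma ideal_adjoin_self I a : is_ideal I -> ideal_adjoin I a a.
Proof. by exists 1, 0; rewrite mul1r addr0; split=> //; apply: ideal0. Qed.

Lemma ass_quot_adjoin I a : is_ideal I -> prime_ideal (colon I a) ->
  ass_quot I `<=` [set colon I a] `|` ass_quot (ideal_adjoin I a).
Proof.
move=> hI pa q [qp [b qE]]; subst q.
have [[t [[c [i [hi Etb]]] nItb]]|hB] :=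
  pselect (exists t, ideal_adjoin I a (t * b) /\ ~ I (t * b)).
  have ntq : ~ colon I b t by [].
  have qE : colon I b = colon I (c * a).
    by rewrite -(prime_colonE qp ntq) -colonM Etb colonD.
  have npc : ~ colon I a c.
    by move=> hc; case: qp => _ [+ _]; apply; rewrite qE /colon /= mul1r.
  by left; rewrite qE colonM; apply: prime_colonE.
right; split=> //; exists b; apply/seteqP; split=> r; rewrite /colon /=.
  exact: sub_ideal_adjoin.
by move=> hr; apply: contrapT => nr; apply: hB; exists r.
Qed.

Lemma noetherian_ind (P : set R -> Prop) : noetherian_ring R ->
  (forall I, is_ideal I ->
     (forall J, is_ideal J -> I `<=` J -> ~ J `<=` I -> P J) -> P I) ->
  forall I, is_ideal I -> P I.
Proof.
move=> hR HP I0 hI0; apply: contrapT => nP0.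
pose S := {I : set R | is_ideal I /\ ~ P I}.
have step (I : S) : exists J : S, sval I `<=` sval J /\ ~ sval J `<=` sval I.
  case: I => [I [hI nPI]] /=; apply: contrapT => hn; apply/nPI/HP => // J hJ IJ nJI.
  by apply: contrapT => nPJ; apply: hn; exists (exist _ J (conj hJ nPJ)).
have [f hf] := choice step.
pose chain k := iter k f (exist _ I0 (conj hI0 nP0)).
have [m hm] := hR (fun k => sval (chain k)) (fun k => (svalP (chain k)).1)
  (fun k => (hf (chain k)).1).
by apply: (hf (chain m)).2; rewrite -(hm m.+1 (leqnSn m)).
Qed.

Lemma ass_quot_finite I : noetherian_ring R -> is_ideal I -> finite_set (ass_quot I).
Proof.
move=> hR; move: I; apply: noetherian_ind => // I hI IH.
have [[p [pp [a pa]]]|none] := pselect (exists p, ass_quot I p); last first.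
  suff -> : ass_quot I = set0 by apply: finite_set0.
  by apply/seteqP; split=> q // hq; apply: none; exists q.
subst p; have IaI : ~ ideal_adjoin I a `<=` I.
  move=> h; case: pp => _ [+ _]; apply; rewrite /colon /= mul1r.
  exact/h/ideal_adjoin_self.
have fin := IH _ (ideal_adjoin_ideal a hI) (@sub_ideal_adjoin I a) IaI.
apply: sub_finite_set (ass_quot_adjoin hI pp) _.
by rewrite finite_setU; split=> //; apply: finite_set1.
Qed.

End Ideals.

Section Modules.
Variables (R : comPzRingType) (L : lmodType R).
Implicit Types (N : set L) (s : seq L) (p q : set R) (c r t : R).

Fixpoint rspan s : set L :=
  if s is x :: s' then [set v | exists c y, rspan s' y /\ v = c *: x + y]
  else [set v | v = 0].

Lemma rspan0 s : rspan s 0.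
Proof. by elim: s => [|x s IH] //=; exists 0, 0; rewrite scale0r addr0. Qed.

Lemma rspanD s u v : rspan s u -> rspan s v -> rspan s (u + v).
Proof.
elim: s u v => [|x s IH] u v /=; first by move=> -> ->; rewrite addr0.
move=> [c [y [hy ->]]] [d [z [hz ->]]]; exists (c + d), (y + z).
by rewrite scalerDl addrACA; split=> //; apply: IH.
Qed.

Lemma rspanZ s a u : rspan s u -> rspan s (a *: u).
Proof.
elim: s u => [|x s IH] u /=; first by move=> ->; rewrite scaler0.
move=> [c [y [hy ->]]]; exists (a * c), (a *: y).
by rewrite scalerDr scalerA; split=> //; apply: IH.
Qed.

Lemma rspan_sum s (r : seq R) : size r = size s ->
  rspan s (\sum_(i < size s) r`_i *: s`_i).
Proof.
elim: s r => [|x s IH] [|c r] //=; first by rewrite big_ord0.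
move=> [hr]; rewrite big_ord_recl; eexists c, _; split=> //.
by under eq_bigr => i _ do rewrite !lift0; apply: IH.
Qed.

Definition ass_in N : set (set R) :=
  [set p | prime_ideal p /\ exists y, N y /\ p = ann y].

Lemma annZ t (y : L) : ann (t *: y) = [set r | ann y (r * t)].
Proof. by apply/seteqP; split=> r; rewrite /ann /= scalerA. Qed.

Lemma ass_in_scale N q t (y : L) :
  prime_ideal q -> q = ann y -> ~ q t -> N (t *: y) -> ass_in N q.
Proof.
move=> qp qy ntq Nty; split=> //; exists (t *: y); split=> //.
by rewrite annZ -qy prime_colonE.
Qed.

Lemma ass_in_cons x s : ass_in (rspan (x :: s)) `<=`
  ass_in (rspan s) `|` ass_quot [set r | rspan s (r *: x)].
Proof.
move=> q [qp [y [[c [y' [hy' Ey]]] qy]]].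
have [[t [Nty ntq]]|hB] := pselect (exists t, rspan s (t *: y) /\ ~ q t).
  by left; apply: ass_in_scale Nty.
right; split=> //; exists c; apply/seteqP; split=> r; rewrite /colon /=.
  rewrite qy /ann /= => hr.
  have -> : (r * c) *: x = r *: y - r *: y' by rewrite Ey scalerDr scalerA addrK.
  by rewrite hr sub0r -scaleN1r; apply/rspanZ/rspanZ.
move=> hr; apply: contrapT => nr; apply: hB; exists r; split=> //.
by rewrite Ey scalerDr scalerA; apply: rspanD => //; apply: rspanZ.
Qed.

Lemma ass_in_rspan_finite s : noetherian_ring R -> finite_set (ass_in (rspan s)).
Proof.
move=> hR; elim: s => [|x s IH].
  suff -> : ass_in (rspan [::]) = set0 by apply: finite_set0.
  apply/seteqP; split=> q // [[_ [q1 _]] [y [/= y0 qy]]]; apply: q1.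
  by rewrite qy /ann /= y0 scaler0.
apply: sub_finite_set (@ass_in_cons x s) _; rewrite finite_setU; split=> //.
apply: ass_quot_finite => //; split; first by rewrite /= scale0r; apply: rspan0.
split=> [a b ha hb|a b hb] /=; first by rewrite scalerDl; apply: rspanD.
by rewrite -scalerA; apply: rspanZ.
Qed.

Lemma Ass_sub_ass_in N p : Ass L p -> ~ supp_quot N p -> ass_in N p.
Proof.
move=> [pp [x px]] nS.
have [t [ntp Ntx]] : exists t, ~ p t /\ N (t *: x).
  apply: contrapT => hn; apply: nS; split=> //; exists x => t ntp Ntx.
  by apply: hn; exists t.
exact: ass_in_scale Ntx.
Qed.

End Modules.

Theorem lemma2p6 (R : comPzRingType) (hR : noetherian_ring R)
  (L : lmodType R) (n : nat) (hL : in_dim_lt L n) :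
  finite_set [set p : set R | Ass L p /\ dim_quot_ge p n].
Proof.
have [N [[s Ns] hN]] := hL.
apply: sub_finite_set (ass_in_rspan_finite s hR).
move=> p [Ap hd]; have [pp [y [Ny py]]] := Ass_sub_ass_in Ap (fun hS => hN p hS hd).
split=> //; exists y; split=> //.
by move: Ny; rewrite Ns => -[r [hr ->]]; apply: rspan_sum.
Qed.
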